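(* For every integer $n\geq 1$, $$\mathrm{SH}_n=\sum_{\substack{\lambda\vdash n\\ \text{all parts }\lambda_i\text{ odd}}} z_\lambda^{-1}\,2^{\ell(\lambda)}(n+1)^{\ell(\lambda)-1}\,p_\lambda ,$$ where $\ell(\lambda)$ is the number of nonzero parts of $\lambda$ and $z_\lambda=\prod_i i^{m_i}m_i!$ when $\lambda$ has $m_i$ parts equal to $i$.
   Context: Work in the ring $\Lambda_{\mathbb Q}$ of symmetric functions with rational coefficients in variables $x=(x_1,x_2,\dots)$; $p_k$ denotes the power sum, $p_\lambda=p_{\lambda_1}p_{\lambda_2}\cdots$. For $f\in\Lambda_{\mathbb Q}$, its shiftification $f(x/x)$ is obtained by writing $f$ as a polynomial in the power sums and substituting $p_{2i+1}\mapsto 2p_{2i+1}$ and $p_{2i}\mapsto 0$ for all $i\ge1$ (equivalently, $f(x/x)=(\omega_y f(x,y))|_{y=x}$, where $\omega_y$ is the involution $\omega$ acting on a second variable set $y$ only). A parking function of length $n$ is a sequence $(a_1,\dots,a_n)$ of positive integers whose weakly increasing rearrangement $b_1\le\cdots\le b_n$ satisfies $b_i\le i$ for all $i$. The symmetric group $S_n$ acts on the set of parking functions of length $n$ by permuting coordinates; $\mathrm{PF}_n$ denotes the Frobenius characteristic of this permutation representation ($\mathrm{PF}_0=1$). Define $\mathrm{SH}_n(x)=\mathrm{PF}_n(x/x)$. *)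

From HB Require Import structures.
From mathcomp Require Import all_boot all_order all_algebra all_fingroup.
From mathcomp Require Import mpoly.
Set Implicit Arguments. Unset Strict Implicit. Unset Printing Implicit Defensive.
Import GRing.Theory.
Local Open Scope ring_scope.

(* The degree-<= n part of Lambda_Q is modelled as Q[p_1,...,p_n]
   (power sums are algebraically independent); variable 'X_i stands for p_(i+1). *)
Notation Sym n := {mpoly rat[n]}.

(* power sum p_k (k >= 1); only k <= n is ever used *)
Definition psum (n k : nat) : Sym n :=
  match (insub k.-1 : option 'I_n) with Some i => 'X_i | None => 0 end.

(* parking functions of length n: a_i = val (a i) must be positive; values are
   drawn from {0..n}, which loses nothing since parking values are <= n *)
Definition parking (n : nat) (a : {ffun 'I_n -> 'I_n.+1}) : bool :=
  ([forall i, 0 < (a i : nat)] &&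
  (let b := sort leq [seq (a i : nat) | i <- enum 'I_n] in
   [forall i : 'I_n, nth 0 b i <= i.+1]))%N.

Definition pf_char (n : nat) (s : 'S_n) : nat :=
  #|[set a : {ffun 'I_n -> 'I_n.+1} | parking a & [ffun i => a (s i)] == a]|.

Definition p_cyc (n : nat) (s : 'S_n) : Sym n :=
  \prod_(C in porbits s) psum n #|C|.

Definition PF (n : nat) : Sym n :=
  (n`!%:R)^-1 * \sum_(s : 'S_n) (pf_char s)%:R * p_cyc s.

Definition shiftify (n : nat) (f : Sym n) : Sym n :=
  f \mPo [tuple (if odd i.+1 then 2%:R *: 'X_i else 0 : Sym n) | i < n].

Definition SH (n : nat) : Sym n := shiftify (PF n).

(* Partitions of n as multiplicity vectors: m i = number of parts equal to i+1 *)
Definition is_partition (n : nat) (m : {ffun 'I_n -> 'I_n.+1}) : bool :=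
  (\sum_(i < n) i.+1 * m i)%N == n.
Definition all_odd_parts (n : nat) (m : {ffun 'I_n -> 'I_n.+1}) : bool :=
  [forall i : 'I_n, ~~ odd i.+1 ==> ((m i : nat) == 0%N)].
Definition plen (n : nat) (m : {ffun 'I_n -> 'I_n.+1}) : nat :=
  (\sum_(i < n) m i)%N.
Definition zee (n : nat) (m : {ffun 'I_n -> 'I_n.+1}) : nat :=
  (\prod_(i < n) (i.+1 ^ m i * (m i)`!))%N.
Definition p_lam (n : nat) (m : {ffun 'I_n -> 'I_n.+1}) : Sym n :=
  \prod_(i < n) (psum n i.+1) ^+ m i.

From mathcomp Require Import all_boot all_order all_algebra all_fingroup.
From mathcomp Require Import mpoly.
From mathcomp Require Import zify ring.
Set Implicit Arguments. Unset Strict Implicit. Unset Printing Implicit Defensive.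
Import GRing.Theory Num.Theory.

(* Pollak's cycle lemma: adding a constant modulo n+1 to all values of a map
   [n] -> Z/(n+1) leaves exactly one parking function in each class.  Shifting
   commutes with permuting coordinates, so a permutation with c cycles fixes
   (n+1)^c / (n+1) parking functions, and
     SH_n = 1/((n+1) n!) sum_(s in S_n) prod_(cycles C of s) y_|C|,
   with y_k = 2(n+1) p_k for odd k and y_k = 0 for even k.  By the exponential
   formula, sum_(s in S_k) prod_C y_|C| = k! sum_(lambda |- k) y_lambda / z_lambda:
   both sides satisfy k c_k = sum_j y_(j+1) c_(k-j-1), obtained by removing the
   cycle through a fixed point, resp. one part of the partition. *)

Lemma sorted_nth_leq_countP (b : seq nat) : sorted leq b ->
  (forall i, i < size b -> nth 0 b i <= i.+1) <->
  (forall j, 0 < j <= size b -> j <= count (leq^~ j) b).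
Proof.
move=> sb; split=> [H j /andP[j0 jb] | H i ib].
  rewrite -(cat_take_drop j b) count_cat.
  have: all (leq^~ j) (take j b).
    apply/(all_nthP 0) => i; rewrite size_takel // => ij.
    by rewrite nth_take //; have := H i (leq_trans ij jb); lia.
  by rewrite all_count => /eqP ->; rewrite size_takel //; lia.
rewrite leqNgt; apply/negP => bi.
have := H i.+1 ib; rewrite -(cat_take_drop i b) count_cat.
have -> : count (leq^~ i.+1) (drop i b) = 0.
  apply/eqP; rewrite -leqn0 leqNgt -has_count; apply/negP => /(has_nthP 0)[k].
  rewrite size_drop nth_drop => kb.
  have : nth 0 b i <= nth 0 b (i + k).
    by apply: (sorted_leq_nth leq_trans leqnn) => //; rewrite ?inE /=; lia.
  lia.
have := count_size (leq^~ i.+1) (take i b); rewrite size_takel ?(ltnW ib); lia.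
Qed.

Lemma count_enum_ord n (P : pred 'I_n) : count P (enum 'I_n) = #|[set i | P i]|.
Proof. by rewrite cardsE cardE -size_filter /enum_mem -enumT /= filter_predT. Qed.

Lemma parkingE n (a : {ffun 'I_n -> 'I_n.+1}) :
  parking a = [forall j : 'I_n, j.+1 <= #|[set i | 0 < a i <= j.+1]|].
Proof.
rewrite /parking; set b := sort leq _.
have szb : size b = n by rewrite size_sort size_map size_enum_ord.
have count_b j : count (leq^~ j) b = #|[set i | a i <= j]|.
  by rewrite count_sort count_map count_enum_ord.
have /sorted_nth_leq_countP := sort_sorted leq_total [seq (a i : nat) | i <- enum 'I_n].
rewrite -/b szb => b_parkP.
have cardE_pos j : (forall i, 0 < a i) ->
    #|[set i | a i <= j]| = #|[set i | 0 < a i <= j]|.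
  by move=> pos; apply: eq_card => i; rewrite !inE pos.
apply/idP/forallP => [/andP[/forallP pos /forallP bP] j | H].
  have := (b_parkP.1 (fun i ilt => bP (Ordinal ilt))) j.+1.
  by rewrite ltn_ord count_b cardE_pos //; apply.
have pos i0 : 0 < a i0.
  rewrite lt0n; apply/negP => /eqP a0.
  have n0 : 0 < n by apply: leq_ltn_trans (ltn_ord i0).
  have n1 : n.-1 < n by rewrite ltn_predL.
  have := H (Ordinal n1); rewrite /= prednK //.
  have : [set i | 0 < a i <= n] \subset ~: [set i0].
    by apply/subsetP => i; rewrite !inE; apply: contraTneq => ->; rewrite a0.
  move/subset_leq_card; rewrite cardsC1 card_ord => le1 le2.
  by have := leq_trans le2 le1; lia.
apply/andP; split; first exact/forallP.
apply/forallP => i; apply: (b_parkP.2 _ i (ltn_ord i)) => j /andP[j0 jn].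
have hj : j.-1 < n by lia.
by have := H (Ordinal hj); rewrite /= prednK // count_b cardE_pos.
Qed.

Section CyclicBallot.
Variables (n : nat) (cnt : nat -> nat).
Hypothesis sum_cnt : \sum_(v < n.+1) cnt v = n.

Definition cprefix x := \sum_(t < x) cnt (t %% n.+1).

Definition ballot_from r :=
  [forall j : 'I_n, j.+1 <= \sum_(t < j.+1) cnt ((t.+1 + r) %% n.+1)].

Lemma cprefixD a b :
  cprefix (a + b) = cprefix a + \sum_(t < b) cnt ((a + t) %% n.+1).
Proof. by rewrite /cprefix big_split_ord. Qed.

Lemma sum_cnt_rot x : \sum_(t < n.+1) cnt ((x + t) %% n.+1) = n.
Proof.
elim: x => [|x IH].
  by rewrite -[RHS]sum_cnt; apply: eq_bigr => t _; rewrite add0n modn_small.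
set g := fun t => cnt ((x + t) %% n.+1).
have -> : \sum_(t < n.+1) cnt ((x.+1 + t) %% n.+1) = \sum_(t < n.+1) g t.+1.
  by apply: eq_bigr => t _; rewrite /g addSnnS.
apply/eqP; rewrite -(eqn_add2l (g 0)).
rewrite -[X in X == _](big_ord_recl n.+1 g) big_ord_recr IH /=.
by rewrite /g addn0 modnDr addnC.
Qed.

Lemma cprefix_period x : cprefix (x + n.+1) = cprefix x + n.
Proof. by rewrite cprefixD sum_cnt_rot. Qed.

Lemma ballot_fromE r :
  ballot_from r = [forall j : 'I_n, cprefix r.+1 + j.+1 <= cprefix (r.+1 + j.+1)].
Proof.
apply: eq_forallb => j; rewrite cprefixD leq_add2l.
by congr (_ <= _); apply: eq_bigr => t _; rewrite addSnnS addnC.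
Qed.

Lemma ballot_from_uniq r1 r2 : r1 < n.+1 -> r2 < n.+1 ->
  ballot_from r1 -> ballot_from r2 -> r1 = r2.
Proof.
wlog lt12 : r1 r2 / r1 < r2.
  move=> W h1 h2 g1 g2; case: (ltngtP r1 r2) => [lt|lt|//]; first exact: W.
  exact/esym/W.
rewrite !ballot_fromE => h1 h2 /forallP g1 /forallP g2.
have j1 : (r2 - r1).-1 < n by lia.
have j2 : (r1 + n.+1 - r2).-1 < n by lia.
have := g1 (Ordinal j1); have := g2 (Ordinal j2); rewrite /= !prednK; try lia.
have -> : r2.+1 + (r1 + n.+1 - r2) = r1.+1 + n.+1 by lia.
have -> : r1.+1 + (r2 - r1) = r2.+1 by lia.
rewrite cprefix_period; lia.
Qed.

(* Start reading right after the first minimiser [s] of [cprefix t - t] over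
   [0 < t <= n.+1]: the cyclic prefix sums then never fall behind. *)
Lemma ballot_from_exists : exists2 r, r < n.+1 & ballot_from r.
Proof.
pose minimiser s := (0 < s <= n.+1) &&
  [forall t : 'I_n.+2, (0 < t) ==> (cprefix s + t <= cprefix t + s)].
have [|s /andP[/andP[s0 sn] /forallP s_min] s_first] := ex_minnP (_ : exists s, minimiser s).
  pose F i := cprefix i.+1 + n.+1 - i.+1.
  have [i _ Fi] := @arg_minnP _ (ord0 : 'I_n.+1) xpredT F isT.
  exists i.+1; rewrite /minimiser ltn_ord; apply/forallP => t; apply/implyP => t0.
  have tn := ltn_ord t; have := ltn_ord i.
  by have := Fi (inord t.-1) isT; rewrite /F inordK ?prednK //; lia.
exists s.-1; first by lia.
rewrite ballot_fromE prednK //; apply/forallP => j; have := ltn_ord j.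
case: (leqP (s + j.+1) n.+1) => sj jn.
  have := s_min (inord (s + j.+1)); rewrite inordK; last by lia.
  rewrite addn_gt0 ltn0Sn orbT /=; lia.
set t := s + j.+1 - n.+1.
have lt_ts : cprefix s + t < cprefix t + s.
  rewrite ltnNge; apply/negP => le_st.
  have /s_first : minimiser t.
    rewrite /minimiser; apply/andP; split; first by lia.
    apply/forallP => u; apply/implyP => u0; have := s_min u; rewrite u0 /=; lia.
  lia.
have -> : s + j.+1 = t + n.+1 by lia.
rewrite cprefix_period; lia.
Qed.

Lemma card_ballot_from : #|[set r : 'I_n.+1 | ballot_from r]| = 1.
Proof.
have [r rn br] := ballot_from_exists.
apply/eqP/cards1P; exists (Ordinal rn); apply/setP => r'; rewrite !inE.
apply/idP/eqP => [br'|->//].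
by apply/val_inj; apply: ballot_from_uniq; rewrite ?ltn_ord.
Qed.

End CyclicBallot.

Lemma porbit_in_porbits (T : finType) (s : {perm T}) x : porbit s x \in porbits s.
Proof. exact: imset_f. Qed.

Section InvariantFunctions.
Variables (T K : finType) (s : {perm T}).

Lemma invariant_ffun_iter (a : {ffun T -> K}) : [ffun i => a (s i)] == a ->
  forall k i, a ((s ^+ k)%g i) = a i.
Proof.
move=> /eqP/ffunP a_inv k i; elim: k => [|k IH]; first by rewrite expg0 perm1.
by rewrite expgSr permM -IH -[RHS]a_inv ffunE.
Qed.

(* An invariant function is a function on the cycles of [s]. *)
Lemma card_invariant_ffun :
  #|[set a : {ffun T -> K} | [ffun i => a (s i)] == a]| = #|K| ^ #|porbits s|.
Proof.
pose cyc := {C : {set T} | C \in porbits s}.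
pose cyc_of i : cyc := exist _ (porbit s i) (porbit_in_porbits s i).
have cyc_ex (C : cyc) : exists x, x \in val C.
  by case: C => C /= /imsetP[i _ ->]; exists i; apply: porbit_id.
pose g (h : {ffun cyc -> K}) := [ffun i => h (cyc_of i)].
have g_inj : injective g.
  move=> h1 h2 /ffunP e; apply/ffunP => -[C CP]; have /imsetP[i _ Ci] := CP.
  have -> : exist _ C CP = cyc_of i by apply: val_inj.
  by have := e i; rewrite !ffunE.
have -> : [set a : {ffun T -> K} | [ffun i => a (s i)] == a] = g @: setT.
  apply/setP => a; rewrite inE; apply/idP/imsetP => [a_inv|[h _ ->]].
    exists [ffun C => a (xchoose (cyc_ex C))] => //.
    apply/ffunP => i; rewrite !ffunE /=.
    by case/porbitP: (xchooseP (cyc_ex (cyc_of i))) => k ->; rewrite invariant_ffun_iter.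
  apply/eqP/ffunP => i; rewrite !ffunE; congr (h _); apply: val_inj => /=.
  by have := porbit_perm s 1 i; rewrite expg1.
by rewrite card_imset // cardsT card_ffun card_sig.
Qed.

End InvariantFunctions.

Section Pollak.
Variable n : nat.
Local Notation fn := {ffun 'I_n -> 'I_n.+1}.

Definition vshift (c : 'I_n.+1) (a : fn) : fn := [ffun i => (a i + c)%R].
Definition vcount (a : fn) (v : nat) := #|[set i | (a i : nat) == v]|.

Lemma sum_vcount a : \sum_(v < n.+1) vcount a v = n.
Proof.
rewrite -[n in RHS]card_ord -sum1_card (partition_big (fun i => a i) xpredT) //.
by apply: eq_bigr => v _; rewrite /vcount -sum1_card; apply: eq_bigl => i; rewrite inE.
Qed.

Lemma card_positive_leq (b : fn) j :
  #|[set i | 0 < b i <= j]| = \sum_(t < j) vcount b t.+1.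
Proof.
elim: j => [|j IH].
  by rewrite big_ord0; apply/eqP; rewrite cards_eq0; apply/eqP/setP => i; rewrite !inE; lia.
rewrite big_ord_recr /= -IH -(cardsID [set i | (b i : nat) == j.+1] [set i | 0 < b i <= j.+1]).
by rewrite addnC; congr (_ + _); apply: eq_card => i; rewrite !inE; lia.
Qed.

Lemma modn_lt_double m d : m < d + d -> m %% d = if m < d then m else m - d.
Proof.
move=> lt2d; case: ifPn => [/modn_small //|]; rewrite -leqNgt => le_dm.
by rewrite -{1}(subnK le_dm) modnDr modn_small //; lia.
Qed.

Lemma vcount_vshift a c t : t < n.+1 ->
  vcount (vshift c a) t = vcount a ((t + (n.+1 - c)) %% n.+1).
Proof.
move=> tn; apply: eq_card => i; rewrite !inE ffunE /=.
have := ltn_ord (a i); have := ltn_ord c => cn an.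
by rewrite !modn_lt_double; try lia; do 2 case: ifP => ?; apply/eqP/eqP; lia.
Qed.

Lemma parking_vshift a c :
  parking (vshift c a) = ballot_from n (vcount a) ((n.+1 - c) %% n.+1).
Proof.
rewrite parkingE /ballot_from; apply: eq_forallb => j.
rewrite card_positive_leq; congr (_ <= _); apply: eq_bigr => t _.
rewrite vcount_vshift; last by have := ltn_ord j; have := ltn_ord t; lia.
by rewrite modnDmr.
Qed.

Lemma card_parking_vshift a : #|[set c | parking (vshift c a)]| = 1.
Proof.
rewrite -(card_ballot_from (sum_vcount a)).
rewrite -[#|[set r : 'I_n.+1 | _]|](card_preimset _ (@oppr_inj _)).
by apply: eq_card => c; rewrite !inE parking_vshift.
Qed.

Lemma vshift_inj c : injective (vshift c).
Proof.
by move=> a b /ffunP e; apply/ffunP => i; have := e i; rewrite !ffunE => /addIr.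
Qed.

Lemma vshift_invariant (s : 'S_n) c a :
  ([ffun i => vshift c a (s i)] == vshift c a) = ([ffun i => a (s i)] == a).
Proof.
apply/eqP/eqP => /ffunP e; apply/ffunP => i; have := e i; rewrite !ffunE.
  by move/addIr.
by move->.
Qed.

(* Each shift class of [s]-invariant functions contains exactly one parking
   function, and shifting is a bijection on invariant functions. *)
Lemma pf_charE (s : 'S_n) : 0 < n -> pf_char s = n.+1 ^ (#|porbits s|).-1.
Proof.
move=> n0; pose I := [set a : fn | [ffun i => a (s i)] == a].
have count_pairs : \sum_(a in I) #|[set c | parking (vshift c a)]| = n.+1 * pf_char s.
  under eq_bigr do rewrite -sum1_card.
  rewrite (exchange_big_dep xpredT) //= (eq_bigr (fun=> pf_char s)).
    by rewrite sum_nat_const card_ord.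
  move=> c _; rewrite sum1_card /pf_char -(card_preimset _ (@vshift_inj c)).
  by apply: eq_card => a; rewrite unfold_in /= !inE vshift_invariant andbC.
have cyc0 : 0 < #|porbits s|.
  by apply/card_gt0P; exists (porbit s (Ordinal n0)); apply: porbit_in_porbits.
move: count_pairs; under eq_bigr do rewrite card_parking_vshift.
rewrite sum1_card card_invariant_ffun card_ord -(prednK cyc0) expnS => /eqP.
by rewrite eqn_pmul2l // => /eqP.
Qed.

End Pollak.

Local Open Scope ring_scope.

Section PermCycles.
Variable T : finType.
Implicit Types (s t u : {perm T}) (A P S : {set T}).

Lemma porbit_perm_mem s x v : (s v \in porbit s x) = (v \in porbit s x).
Proof.
by rewrite -!eq_porbit_mem; have := porbit_perm s 1 v; rewrite expg1 => ->.
Qed.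

Lemma porbit_eq_on S s u v : {in S, forall w, u w \in S} -> {in S, s =1 u} ->
  v \in S -> porbit s v = porbit u v.
Proof.
move=> uS suS vS.
have iterE i : (s ^+ i)%g v = (u ^+ i)%g v /\ (u ^+ i)%g v \in S.
  elim: i => [|i [IH1 IH2]]; first by rewrite !expg0 !perm1.
  by rewrite !expgSr !permM IH1 suS // uS.
by apply/porbit_setP => z; apply/porbitP/porbitP => -[i ->]; exists i; case: (iterE i).
Qed.

Lemma porbit_subset A s x : perm_on A s -> x \in A -> porbit s x \subset A.
Proof.
move=> sA xA; apply/subsetP => z /porbitP[i ->].
elim: i => [|i IH]; first by rewrite expg0 perm1.
by rewrite expgSr permM perm_closed.
Qed.

Lemma permM_disjoint P s t : perm_on P s -> perm_on (~: P) t ->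
  forall v, (s * t)%g v = if v \in P then s v else t v.
Proof.
move=> sP tP v; rewrite permM; case: ifP => vP; last by rewrite (out_perm sP) ?vP.
by rewrite (out_perm tP) // inE perm_closed // vP.
Qed.

Lemma permM_disjoint_inj P s1 s2 t1 t2 :
  perm_on P s1 -> perm_on P s2 -> perm_on (~: P) t1 -> perm_on (~: P) t2 ->
  (s1 * t1 = s2 * t2)%g -> s1 = s2 /\ t1 = t2.
Proof.
move=> s1P s2P t1P t2P /permP e; split; apply/permP => v; have := e v;
  rewrite (permM_disjoint s1P t1P) (permM_disjoint s2P t2P); case: ifP => // vP.
  by rewrite !(out_perm s1P, out_perm s2P) ?vP.
by rewrite !(out_perm t1P, out_perm t2P) // inE vP.
Qed.

Definition cycle_perms x P := [set s | perm_on P s & porbit s x == P].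

(* A permutation whose cycle through [x] is [P] splits, via [restr_perm], into
   that cycle and a permutation of the complement. *)
Lemma perm_on_porbitE A P x : x \in P -> P \subset A ->
  [set s | perm_on A s & porbit s x == P] =
  [set (st.1 * st.2)%g | st in setX (cycle_perms x P) [set t | perm_on (A :\: P) t]].
Proof.
move=> xP PA; apply/setP => s; rewrite inE; apply/andP/imsetP => [[sA /eqP sx]|].
  have nPs : s \in ('N(P | 'P))%g.
    by apply/astabsP => v; rewrite /= /aperm -sx porbit_perm_mem.
  have nCPs : s \in ('N(~: P | 'P))%g by rewrite astabsC.
  exists (restr_perm P s, restr_perm (~: P) s); last first.
    apply/permP => v; rewrite permM /=; have [vP|vP] := boolP (v \in P).
      rewrite [restr_perm P s v]restr_permE // (out_perm (restr_perm_on _ _)) //.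
      by rewrite inE negbK -sx porbit_perm_mem sx.
    by rewrite (out_perm (restr_perm_on P s)) // restr_permE // inE.
  rewrite !inE /= restr_perm_on (porbit_eq_on (S := P) (u := s)) ?sx ?eqxx /=.
  - apply/subsetP => v; rewrite !inE; apply: contraNT => vPA.
    have [vP|vP] := boolP (v \in P).
      by rewrite (out_perm (restr_perm_on _ _)) ?inE ?vP.
    rewrite restr_permE //; last by rewrite inE.
    by rewrite (out_perm sA) //; move: vPA; rewrite vP.
  - by move=> w wP; rewrite -sx porbit_perm_mem sx.
  - by move=> w wP; rewrite restr_permE.
  - exact: xP.
move=> [[σ t]]; rewrite !inE /= => /andP[/andP[σP /eqP σx] tP] ->.
have tCP : perm_on (~: P) t by apply: subset_trans tP _; apply/subsetP => v; rewrite !inE => /andP[].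
split.
  by apply: perm_onM; [apply: subset_trans σP PA | apply: subset_trans tP (subsetDl _ _)].
apply/eqP; rewrite -σx; apply: (porbit_eq_on (S := P)) => // [w wP|w wP].
  by rewrite perm_closed.
by rewrite (permM_disjoint σP tCP) wP.
Qed.

Lemma sum_perm_on_porbit (V : nmodType) (F : {perm T} -> V) A P x :
  x \in P -> P \subset A ->
  \sum_(s | perm_on A s && (porbit s x == P)) F s =
  \sum_(σ in cycle_perms x P) \sum_(t | perm_on (A :\: P) t) F (σ * t)%g.
Proof.
move=> xP PA; rewrite pair_big_dep /=.
set D := setX (cycle_perms x P) [set t | perm_on (A :\: P) t].
have inj : {in D &, injective (fun st => st.1 * st.2)%g}.
  move=> [σ1 t1] [σ2 t2]; rewrite !inE /= => /andP[/andP[σ1P _] t1P] /andP[/andP[σ2P _] t2P].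
  have onC t : perm_on (A :\: P) t -> perm_on (~: P) t.
    by move=> tAP; apply: subset_trans tAP _; apply/subsetP => v; rewrite !inE => /andP[].
  by move=> /(permM_disjoint_inj σ1P σ2P (onC _ t1P) (onC _ t2P))[-> ->].
transitivity (\sum_(s in [set s | perm_on A s & porbit s x == P]) F s).
  by apply: eq_bigl => s; rewrite inE.
by rewrite perm_on_porbitE // big_imset //; apply: eq_bigl => -[σ t]; rewrite !inE.
Qed.

End PermCycles.

Section CycleWeight.
Variables (T : finType) (R : comNzRingType) (y : nat -> R).
Implicit Types (s t : {perm T}) (A P S : {set T}).

Definition cycle_weight A s := \prod_(C in porbits s | C \subset A) y #|C|.

Lemma cycle_weight_porbit A s x : perm_on A s -> x \in A ->
  cycle_weight A s = y #|porbit s x| * cycle_weight (A :\: porbit s x) s.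
Proof.
move=> sA xA; rewrite /cycle_weight (bigD1 (porbit s x)) /=; last first.
  by rewrite porbit_in_porbits porbit_subset.
congr (_ * _); apply: eq_bigl => C; case Cs: (C \in porbits s) => //=.
have [z _ ->] := imsetP Cs.
have orbit_memE w : w \in porbit s z -> (w \in porbit s x) = (porbit s z == porbit s x).
  by rewrite -!eq_porbit_mem => /eqP ->.
apply/andP/idP => [[zA zx]|zAx].
  by apply/subsetP => w wz; rewrite inE (subsetP zA) // orbit_memE ?zx.
split; first exact: subset_trans zAx (subsetDl _ _).
by have := subsetP zAx z (porbit_id s z); rewrite inE orbit_memE ?porbit_id // => /andP[].
Qed.

Lemma cycle_weight_eq_on A S s t : {in S, forall w, t w \in S} ->
  {in S, s =1 t} -> A \subset S -> cycle_weight A s = cycle_weight A t.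
Proof.
move=> tS stS AS; apply: eq_bigl => C.
apply/andP/andP => -[/imsetP[v _ ->] CA]; split => //;
  have vS : v \in S by apply/(subsetP AS)/(subsetP CA)/porbit_id.
  by rewrite (porbit_eq_on tS stS vS) porbit_in_porbits.
by rewrite -(porbit_eq_on tS stS vS) porbit_in_porbits.
Qed.

Lemma sum_cycle_weight_porbit A x : x \in A ->
  \sum_(s | perm_on A s) cycle_weight A s =
  \sum_(P in [set P : {set T} | x \in P & P \subset A])
     y #|P| *+ #|cycle_perms x P| * \sum_(t | perm_on (A :\: P) t) cycle_weight (A :\: P) t.
Proof.
move=> xA; set Ps := [set P : {set T} | x \in P & P \subset A].
rewrite (partition_big (porbit^~ x) (fun P => P \in Ps));
  last by move=> s sA; rewrite inE porbit_id porbit_subset.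
apply: eq_bigr => P; rewrite inE => /andP[xP PA].
under eq_bigr => s /andP[sA /eqP sx] do rewrite (cycle_weight_porbit sA xA) sx.
rewrite sum_perm_on_porbit // mulrnAl -sumr_const.
apply: eq_bigr => σ /[!inE] /andP[σP _]; rewrite mulr_sumr.
apply: eq_bigr => t tP; congr (_ * _).
have PC : A :\: P \subset ~: P by apply/subsetP => w; rewrite !inE => /andP[].
have tPC : perm_on (~: P) t := subset_trans tP PC.
apply: (cycle_weight_eq_on (S := ~: P)) => // w wP; first by rewrite perm_closed.
by rewrite (permM_disjoint σP tPC); move: wP; rewrite inE => /negbTE ->.
Qed.

End CycleWeight.

Section SubsetSums.
Variables (T : finType) (V : nmodType).

Lemma sum_subset_card (g : nat -> V) (B : {set T}) :
  \sum_(Q in [set Q : {set T} | Q \subset B]) g #|Q| =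
  \sum_(j < #|B|.+1) g j *+ 'C(#|B|, j).
Proof.
rewrite (partition_big (fun Q : {set T} => inord #|Q| : 'I_#|B|.+1) xpredT) //.
apply: eq_bigr => j _; rewrite -cards_draws -sumr_const.
have cardQ (Q : {set T}) : Q \subset B -> (inord #|Q| == j) = (#|Q| == j).
  by move=> QB; rewrite -(inj_eq val_inj) /= inordK // ltnS subset_leq_card.
apply: eq_big => [Q|Q /andP[/[!inE] QB]]; last by rewrite cardQ // => /eqP ->.
by rewrite !inE; case QB: (Q \subset B); rewrite //= cardQ.
Qed.

Lemma sum_subset_mem_card (f : nat -> V) (A : {set T}) x : x \in A ->
  \sum_(P in [set P : {set T} | x \in P & P \subset A]) f #|P| =
  \sum_(j < #|A :\ x|.+1) f j.+1 *+ 'C(#|A :\ x|, j).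
Proof.
move=> xA; rewrite -(sum_subset_card (f \o succn)).
have xNQ (Q : {set T}) : Q \subset A :\ x -> x \notin Q.
  by move=> QA; apply/negP => /(subsetP QA); rewrite !inE eqxx.
have inj : {in [set Q : {set T} | Q \subset A :\ x] &, injective (fun Q => x |: Q)}.
  by move=> Q1 Q2 /[!inE] /xNQ x1 /xNQ x2 e; rewrite -(setU1K x1) -(setU1K x2) e.
transitivity (\sum_(P in (fun Q => x |: Q) @: [set Q : {set T} | Q \subset A :\ x]) f #|P|).
  apply: eq_bigl => P; rewrite inE; apply/andP/imsetP => [[xP PA]|[Q /[!inE] QA ->]].
    by exists (P :\ x); rewrite ?setD1K // inE setSD.
  rewrite setU11; split=> //; apply/subsetP => z /[!inE] /orP[/eqP -> //|/(subsetP QA)].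
  by rewrite inE => /andP[].
by rewrite big_imset //; apply: eq_bigr => Q /[!inE] /xNQ xQ; rewrite cardsU1 xQ.
Qed.

End SubsetSums.

Section CyclePermsCount.
Variable T : finType.

Lemma sum_cycle_weight1 (A : {set T}) :
  \sum_(s | perm_on A s) cycle_weight (fun=> 1 : rat) A s = #|A|`!%:R.
Proof. by rewrite (eq_bigr (fun=> 1)) ?sumr_const ?card_perm // => s _; apply: big1. Qed.

(* Strong induction on [#|P|]: in the recursion of [sum_cycle_weight_porbit]
   with unit weights, the term of the full cycle [P] is the only unknown. *)
Lemma card_cycle_perms (x : T) (P : {set T}) :
  x \in P -> #|cycle_perms x P| = (#|P|.-1)`!.
Proof.
move Pk: #|P| => k; elim/ltn_ind: k x P Pk => k IH x P Pk xP.
set Qs := [set Q : {set T} | x \in Q & Q \subset P].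
have cardD Q : Q \in Qs -> #|P :\: Q| = (k - #|Q|)%N.
  by rewrite inE => /andP[_ QP]; rewrite cardsD (setIidPr QP) Pk.
have rec : k`!%:R = \sum_(Q in Qs) (#|cycle_perms x Q| * (k - #|Q|)`!)%:R :> rat.
  rewrite -Pk -sum_cycle_weight1 (sum_cycle_weight_porbit _ xP) Pk.
  by apply: eq_bigr => Q /cardD cQ; rewrite sum_cycle_weight1 cQ natrM mulr_natl.
have factorial_sum : k`!%:R = \sum_(Q in Qs) ((#|Q|.-1)`! * (k - #|Q|)`!)%:R :> rat.
  rewrite (sum_subset_mem_card (fun j => ((j.-1)`! * (k - j)`!)%:R)) //.
  have -> : #|P :\ x| = k.-1 by rewrite -Pk (cardsD1 x P) xP.
  rewrite (eq_bigr (fun=> (k.-1)`!%:R)) => [|j _]; last first.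
    have jk : (j <= k.-1)%N by rewrite -ltnS ltn_ord.
    have -> : (k - j.+1 = k.-1 - j)%N by lia.
    by rewrite -mulrnA mulnC bin_fact.
  have k0 : (0 < k)%N by rewrite -Pk; apply/card_gt0P; exists x.
  by rewrite big_const_ord iter_addr_0 -mulrnA mulnC -[in LHS](prednK k0) factS.
have IHQ Q : Q \in Qs -> Q != P -> #|cycle_perms x Q| = (#|Q|.-1)`!.
  rewrite inE => /andP[xQ QP] QnP; apply: (IH #|Q|) => //.
  by rewrite -Pk; apply: proper_card; rewrite properEneq QnP.
have PQs : P \in Qs by rewrite inE xP subxx.
move: factorial_sum; rewrite rec !(bigD1 P PQs) /= Pk subnn.
under eq_bigr => Q /andP[QQs QnP] do rewrite IHQ //.
by move=> /addIr /eqP; rewrite eqr_nat !muln1 => /eqP.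
Qed.

End CyclePermsCount.

Section CycleIndex.
Variable N : nat.
Local Notation mults := {ffun 'I_N -> 'I_N.+1}.
Implicit Types (m : mults) (i : 'I_N).

Definition pweight m := (\sum_(i < N) i.+1 * m i)%N.

(* [inord] wraps [N.+1] to [0], so [add_part i m] is meaningful only when
   [m i < N]. *)
Definition add_part i m : mults :=
  [ffun j => if j == i then inord (m j).+1 else m j].
Definition del_part i m : mults :=
  [ffun j => if j == i then inord (m j).-1 else m j].

Lemma add_part_same i m : (m i < N)%N -> add_part i m i = (m i).+1 :> nat.
Proof. by move=> lt; rewrite ffunE eqxx inordK. Qed.

Lemma add_part_other i j m : j != i -> add_part i m j = m j.
Proof. by rewrite ffunE => /negbTE ->. Qed.

Lemma add_partK i m : (m i < N)%N -> del_part i (add_part i m) = m.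
Proof.
move=> lt; apply/ffunP => j; rewrite ffunE; case: eqP => [->|/eqP ji].
  by apply/val_inj; rewrite /= add_part_same // inordK //; lia.
exact: add_part_other.
Qed.

Lemma del_partK i m : (0 < m i)%N -> add_part i (del_part i m) = m.
Proof.
move=> gt; apply/ffunP => j; rewrite !ffunE; case: eqP => [->|//].
by apply/val_inj; rewrite /= ?eqxx !inordK ?prednK //; have := ltn_ord (m i); lia.
Qed.

Lemma size_mult_le_pweight i m : (i.+1 * m i <= pweight m)%N.
Proof. by rewrite /pweight (bigD1 i) //= leq_addr. Qed.

Lemma mult_le_pweight i m : (m i <= pweight m)%N.
Proof. exact: leq_trans (leq_pmull _ _) (size_mult_le_pweight i m). Qed.

Lemma pweight_add_part i m : (m i < N)%N -> pweight (add_part i m) = (pweight m + i.+1)%N.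
Proof.
move=> lt; rewrite /pweight (bigD1 i) //= [in RHS](bigD1 i) //= add_part_same //.
under eq_bigr => j ji do rewrite add_part_other //; ring.
Qed.

Lemma zee_add_part i m : (m i < N)%N -> zee (add_part i m) = (zee m * (i.+1 * (m i).+1))%N.
Proof.
move=> lt; rewrite /zee (bigD1 i) //= [in RHS](bigD1 i) //= add_part_same //.
under eq_bigr => j ji do rewrite add_part_other //; rewrite expnS factS; ring.
Qed.

Variables (R : comAlgType rat) (y : nat -> R).

Definition pmonom m : R := \prod_(i < N) y i.+1 ^+ m i.

Definition cycle_index k : R :=
  \sum_(m | pweight m == k) (zee m)%:R^-1 *: pmonom m.

Lemma pmonom_add_part i m : (m i < N)%N -> pmonom (add_part i m) = y i.+1 * pmonom m.
Proof.
move=> lt; rewrite /pmonom (bigD1 i) //= [in RHS](bigD1 i) //= add_part_same //.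
by rewrite exprS -mulrA; under eq_bigr => j ji do rewrite add_part_other //.
Qed.

Lemma cycle_index0 : cycle_index 0 = 1.
Proof.
rewrite /cycle_index (big_pred1 [ffun=> ord0]) => [|m]; last first.
  rewrite /pweight sum_nat_eq0; apply/forallP/eqP => [m0|-> i].
    apply/ffunP => i; apply/val_inj; rewrite ffunE /=.
    by have := m0 i; rewrite /= muln_eq0 => /eqP.
  by rewrite ffunE muln0.
rewrite /zee /pmonom (eq_bigr (fun=> 1%N)) => [|i _]; last by rewrite ffunE.
by rewrite big1_eq (eq_bigr (fun=> 1)) => [|i _]; rewrite ?ffunE ?big1_eq ?invr1 ?scale1r.
Qed.

Lemma add_part_weightE i k m : (i < k <= N)%N ->
  [&& pweight (add_part i m) == k, (0 < add_part i m i)%N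
    & del_part i (add_part i m) == m] =
  (pweight m == k - i.+1)%N.
Proof.
move=> /andP[ik kN]; have [lt|ge] := ltnP (m i) N.
  rewrite pweight_add_part // add_part_same // add_partK // eqxx andbT /=.
  by apply/eqP/eqP; lia.
have mN : m i = N :> nat by have := ltn_ord (m i); lia.
have -> : add_part i m i = ord0.
  by apply/val_inj; rewrite ffunE eqxx /= /inord /insubd insubF //= mN ltnn.
rewrite andbF; apply/esym/negbTE/eqP => wm.
by have := mult_le_pweight i m; rewrite wm mN; lia.
Qed.

Lemma sum_part_size_cycle_index i k : (k <= N)%N ->
  \sum_(m | pweight m == k) (i.+1 * m i)%N%:R *: ((zee m)%:R^-1 *: pmonom m) =
  if (i < k)%N then y i.+1 * cycle_index (k - i.+1)%N else 0.
Proof.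
move=> kN; rewrite (bigID (fun m => 0 < m i)%N) /= [X in _ + X]big1 ?addr0;
  last by move=> m /andP[_]; rewrite lt0n negbK => /eqP ->; rewrite muln0 scale0r.
case: ifP => ik; last first.
  apply: big1 => m /andP[/eqP wk mi]; have := size_mult_le_pweight i m.
  by move: ik; rewrite wk; nia.
rewrite (reindex_onto (add_part i) (del_part i)) => [|m /andP[_]]; last exact: del_partK.
rewrite /cycle_index mulr_sumr.
apply: eq_big => [m|m]; first by rewrite -andbA add_part_weightE ?ik.
rewrite -andbA add_part_weightE ?ik // => /eqP wm.
have lt : (m i < N)%N by rewrite (leq_ltn_trans (mult_le_pweight i m)) // wm; lia.
rewrite zee_add_part // pmonom_add_part // add_part_same // scalerA scalerAr.
congr (_ * (_ *: _)); rewrite [X in _ / X]natrM invfM mulrCA mulfV ?mulr1 //.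
by rewrite pnatr_eq0 muln_eq0.
Qed.

Lemma cycle_index_rec k : (0 < k <= N)%N ->
  k%:R *: cycle_index k = \sum_(j < k) y j.+1 * cycle_index (k - j.+1)%N.
Proof.
move=> /andP[k0 kN].
rewrite (big_ord_widen N (fun j => y j.+1 * cycle_index (k - j.+1)%N)) // big_mkcond /=.
rewrite -(eq_bigr _ (fun i _ => sum_part_size_cycle_index i kN)) exchange_big /=.
rewrite /cycle_index scaler_sumr; apply: eq_bigr => m /eqP wk.
by rewrite -scaler_suml -natr_sum -/(pweight m) wk.
Qed.

End CycleIndex.

Lemma pmonomZ N (R : comAlgType rat) c (f : nat -> R) (m : {ffun 'I_N -> 'I_N.+1}) :
  pmonom (fun k => c *: f k) m = c ^+ plen m *: pmonom f m.
Proof. by rewrite /pmonom -prodrXr -scaler_prod; apply: eq_bigr => i _; rewrite exprZn. Qed.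

Lemma zee_gt0 N (m : {ffun 'I_N -> 'I_N.+1}) : (0 < zee m)%N.
Proof. by rewrite prodn_gt0 // => i; rewrite muln_gt0 expn_gt0 fact_gt0. Qed.

Section ExponentialFormula.
Variables (T : finType) (N : nat) (R : comAlgType rat) (y : nat -> R).
Hypothesis card_T : (#|T| <= N)%N.

Lemma natmul_mul_scale (u v : R) a b c :
  u *+ a * (b%:R *: v) *+ c = (c * (a * b))%:R *: (u * v).
Proof.
rewrite -scalerAr mulrnAl scalerMnr -mulrnA -scalerMnl scale1r -mulrnA scaler_nat.
by congr (_ *+ _); lia.
Qed.

Lemma sum_cycle_weight (A : {set T}) :
  \sum_(s | perm_on A s) cycle_weight y A s = #|A|`!%:R *: cycle_index N y #|A|.
Proof.
move Ak: #|A| => k; elim/ltn_ind: k A Ak => -[_ A /cards0_eq ->|k IH A Ak].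
  rewrite cycle_index0 fact0 scale1r (eq_bigr (fun=> 1)) ?sumr_const ?card_perm ?cards0 //.
  move=> s _; apply: big_pred0 => C; apply/negbTE/andP => -[/imsetP[v _ ->]].
  by move/subsetP/(_ v (porbit_id s v)); rewrite inE.
have [x xA] : exists x, x \in A by apply/card_gt0P; rewrite Ak.
have kN : (k < N)%N by rewrite -Ak (leq_trans (max_card _)).
rewrite (sum_cycle_weight_porbit y xA).
under eq_bigr => P /[!inE] /andP[xP PA].
  have cardD : #|A :\: P| = (k.+1 - #|P|)%N by rewrite cardsD (setIidPr PA) Ak.
  have P0 : (0 < #|P|)%N by apply/card_gt0P; exists x.
  have lt : (k.+1 - #|P| < k.+1)%N by lia.
  rewrite card_cycle_perms // (IH _ lt _ cardD).
over.
rewrite (sum_subset_mem_card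
  (fun j => y j *+ (j.-1)`! * ((k.+1 - j)`!%:R *: cycle_index N y (k.+1 - j)%N))) //.
have -> : #|A :\ x| = k by move: Ak; rewrite (cardsD1 x A) xA => -[].
under eq_bigr => j _.
  rewrite subSS natmul_mul_scale (bin_fact (leq_ord j)).
over.
by rewrite /= -scaler_sumr factS natrM mulrC -scalerA cycle_index_rec ?kN.
Qed.

End ExponentialFormula.

Section Shiftification.
Variable n : nat.
Hypothesis n_gt0 : (0 < n)%N.
Local Notation R := {mpoly rat[n]}.

Definition psum_shifted (k : nat) : R := if odd k then 2%:R *: psum n k else 0.

Lemma shiftify_psum k : (0 < k <= n)%N -> shiftify (psum n k) = psum_shifted k.
Proof.
move=> /andP[k0 kn]; have kl : (k.-1 < n)%N by lia.
rewrite /psum_shifted /shiftify /psum (insubT (fun i => i < n)%N kl) /=.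
by rewrite comp_mpolyXU -tnth_nth tnth_mktuple /= -oddS prednK.
Qed.

Lemma shiftifyM (a b : R) : shiftify (a * b) = shiftify a * shiftify b.
Proof. exact: rmorphM. Qed.

Lemma invr_natmpoly (k : nat) : (k%:R : R)^-1 = k%:R^-1 *: 1.
Proof. by rewrite -[k%:R in LHS](rmorph_nat (in_alg R)) -fmorphV. Qed.

Definition cycle_var (k : nat) : R := (n.+1)%:R *: psum_shifted k.

Lemma shiftify_pf_term (s : 'S_n) :
  shiftify ((pf_char s)%:R * p_cyc s) = (n.+1)%:R^-1 *: cycle_weight cycle_var setT s.
Proof.
rewrite shiftifyM /shiftify rmorph_nat rmorph_prod.
rewrite (eq_bigr (fun C : {set 'I_n} => psum_shifted #|C|)) => [|C /imsetP[v _ ->]];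
  last first.
  rewrite -shiftify_psum // lt0n card_porbit_neq0 /=.
  by rewrite (leq_trans (max_card _)) // card_ord.
rewrite /cycle_weight (eq_bigl (mem (porbits s))) => [|C]; last first.
  by rewrite subsetT andbT.
have cyc0 : (0 < #|porbits s|)%N.
  by apply/card_gt0P; exists (porbit s (Ordinal n_gt0)); apply: porbit_in_porbits.
rewrite /cycle_var scaler_prodl scalerA pf_charE // natrX.
rewrite -{2}(prednK cyc0) exprS mulKf ?pnatr_eq0 //.
by rewrite -mulr_algl -in_algE rmorphXn rmorph_nat.
Qed.

Lemma sum_cycle_weight_perms :
  \sum_(s : 'S_n) cycle_weight cycle_var setT s = n`!%:R *: cycle_index n cycle_var n.
Proof.
have := sum_cycle_weight cycle_var (eq_leq (card_ord n)) [set: 'I_n].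
by rewrite cardsT card_ord => <-; apply: eq_bigl => s; apply/esym/subsetP => i; rewrite inE.
Qed.

Lemma SH_cycle_index : SH n = (n.+1)%:R^-1 *: cycle_index n cycle_var n.
Proof.
rewrite /SH /PF shiftifyM invr_natmpoly /shiftify comp_mpolyZ rmorph1 rmorph_sum.
rewrite (eq_bigr (fun s => (n.+1)%:R^-1 *: cycle_weight cycle_var setT s)) => [|s _];
  last by rewrite -shiftify_pf_term.
rewrite -scaler_sumr sum_cycle_weight_perms -scalerAl mul1r !scalerA.
by rewrite mulrAC mulVf ?mul1r // pnatr_eq0 -lt0n fact_gt0.
Qed.

Lemma pmonom_psum_shifted (m : {ffun 'I_n -> 'I_n.+1}) :
  pmonom psum_shifted m = if all_odd_parts m then 2%:R ^+ plen m *: p_lam m else 0.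
Proof.
case: ifPn => [/forallP odd_m | /forallPn[i]].
  rewrite /p_lam -prodrXr -scaler_prod; apply: eq_bigr => i _.
  rewrite /psum_shifted; case: ifPn => [_|even_i]; first by rewrite exprZn.
  by have /implyP/(_ even_i)/eqP -> := odd_m i; rewrite !expr0 scale1r.
rewrite negb_imply => /andP[even_i mi]; rewrite /pmonom (bigD1 i) //=.
by rewrite /psum_shifted (negbTE even_i) expr0n (negbTE mi) mul0r.
Qed.

Lemma plen_gt0 (m : {ffun 'I_n -> 'I_n.+1}) : pweight m == n -> (0 < plen m)%N.
Proof.
move=> /eqP wm; rewrite lt0n; apply/negP; rewrite /plen sum_nat_eq0 => /forallP m0.
have : pweight m = 0%N.
  by apply/eqP; rewrite sum_nat_eq0; apply/forallP => i; rewrite (eqP (m0 i)) muln0.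
by rewrite wm => n0; move: n_gt0; rewrite n0.
Qed.

Lemma cycle_index_term (m : {ffun 'I_n -> 'I_n.+1}) : pweight m == n ->
  (n.+1)%:R^-1 *: ((zee m)%:R^-1 *: pmonom cycle_var m) =
  if all_odd_parts m then
    ((zee m)%:R^-1 * 2%:R ^+ plen m * (n.+1)%:R ^+ (plen m).-1) *: p_lam m
  else 0.
Proof.
move=> /plen_gt0 len0; rewrite pmonomZ pmonom_psum_shifted.
case: ifP => _; last by rewrite !scaler0.
rewrite !scalerA; congr (_ *: _).
rewrite -{1}(prednK len0) exprS; field.
by rewrite nat1r !pnatr_eq0 -!lt0n zee_gt0.
Qed.

End Shiftification.

Theorem theorem2p1 (n : nat) (hn : (1 <= n)%N) :
  SH n =
  \sum_(m : {ffun 'I_n -> 'I_n.+1} | is_partition m && all_odd_parts m)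
     ((zee m)%:R^-1 * 2%:R ^+ plen m * (n.+1)%:R ^+ (plen m).-1) *: p_lam m.
Proof.
rewrite SH_cycle_index // /cycle_index scaler_sumr big_mkcondr /=.
by apply: eq_big => [//|m]; apply: cycle_index_term.
Qed.
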